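(* Let $d\ge2$, $n\ge1$, and consider rotor-router aggregation in $\mathbb{Z}^d$ with $n$ particles started at the origin and any initial rotor configuration. Let $u(x)$ be the total number of exits from $x$ made by the $n$ particles, and for a directed edge $(x,y)$ between lattice neighbors let $\kappa(x,y)$ be the number of crossings from $x$ to $y$ minus the number of crossings from $y$ to $x$ made by the $n$ particles. Then for every pair of lattice neighbors $x\sim y$, \[ \big|\,u(y)-u(x)+2d\,\kappa(x,y)\,\big|\le 4d-2. \]
   Context: Rotor-router walk in $\mathbb{Z}^d$: fix a cyclic ordering of the $2d$ unit directions; each site has a rotor pointing in one of them. A particle at $x$ first advances the rotor at $x$ to the next direction in the cyclic order and then steps in that direction. Rotor-router aggregation: $n$ particles start at the origin and are released one at a time; each performs rotor-router walk until reaching a site not occupied by an earlier particle, where it stops. *)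

From HB Require Import structures.
From mathcomp Require Import all_boot all_order all_algebra.
Set Implicit Arguments. Unset Strict Implicit. Unset Printing Implicit Defensive.
Import Order.TTheory GRing.Theory Num.Theory.

Definition point (d : nat) := {ffun 'I_d -> int}.
(* Unit directions: (coordinate k, sign) ; true = +e_k, false = -e_k. *)
Definition dir (d : nat) := ('I_d * bool)%type.

Definition unitvec d (e : dir d) : point d :=
  [ffun i => if i == e.1 then (if e.2 then 1 else -1) else 0]%R.
Definition shift d (x : point d) (e : dir d) : point d :=
  [ffun i => x i + unitvec e i]%R.
Definition origin d : point d := [ffun _ => 0%R].

Definition neighbors d (x y : point d) : Prop := exists e : dir d, y = shift x e.

(* Rotor states are 'I_(2d); the cyclic ordering of the 2d directions is
   given by an injective (hence bijective) map  ord : 'I_(2d) -> dir d,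
   the successor of state i being ordS i (i.e. i+1 mod 2d). *)
Record state (d : nat) := State {
  rotor : point d -> 'I_(2 * d);
  occ   : seq (point d);          (* sites occupied by earlier particles *)
  pos   : point d
}.

(* One elementary step of the aggregation: if the current particle is on an
   occupied site, advance the rotor there and step in the new rotor
   direction; otherwise the particle stops (occupies the site) and the next
   particle is released at the origin. *)
Definition agg_step d (ord : 'I_(2 * d) -> dir d) (s : state d) : state d :=
  let x := pos s in
  if x \in occ s then
    let r' := fun z => if z == x then ordS (rotor s x) else rotor s z in
    State r' (occ s) (shift x (ord (r' x)))
  else State (rotor s) (x :: occ s) (origin d).

Definition agg_state d (ord : 'I_(2 * d) -> dir d) (rho0 : point d -> 'I_(2 * d))
  (t : nat) : state d :=
  iter t (agg_step ord) (State rho0 [::] (origin d)).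

Definition final_time d ord rho0 (n T : nat) : Prop :=
  size (occ (agg_state (d := d) ord rho0 T)) = n /\
  forall t, t < T -> size (occ (agg_state ord rho0 t)) < n.

Definition exits_at d ord rho0 (t : nat) (x : point d) : bool :=
  let s := agg_state ord rho0 t in (pos s == x) && (x \in occ s).

Definition exits d ord rho0 (T : nat) (x : point d) : nat :=
  count (fun t => exits_at ord rho0 t x) (iota 0 T).

Definition crossings d ord rho0 (T : nat) (x y : point d) : nat :=
  count (fun t => exits_at ord rho0 t x && (pos (agg_state ord rho0 t.+1) == y))
        (iota 0 T).

Definition kappa d ord rho0 (T : nat) (x y : point d) : int :=
  ((crossings (d := d) ord rho0 T x y)%:Z - (crossings ord rho0 T y x)%:Z)%R.

From HB Require Import structures.
From mathcomp Require Import all_boot all_order all_algebra.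
From mathcomp Require Import zify.
Import Order.TTheory GRing.Theory Num.Theory.

(* Since the rotor at x advances by one position per exit, the k-th exit
   from x (k = 1, 2, ...) leaves in direction  ord ((rho0 x + k) mod 2d).
   Hence, if the direction from x to its neighbour y is ord i0, the number
   N(x,y) of crossings from x to y is the number of k <= u(x) with
   rho0 x + k = i0 (mod 2d): a count of multiples of 2d in a window of
   u(x) consecutive integers, so that  |2d N(x,y) - u(x)| <= 2d - 1.
   Writing  u(y) - u(x) + 2d kappa(x,y)
          = (2d N(x,y) - u(x)) - (2d N(y,x) - u(y))
   and applying the triangle inequality gives the bound 4d - 2.

   The estimate holds at every time T. *)

Lemma count_dvdn_iota (m N : nat) : 0 < m ->
  count (dvdn m) (iota 0 N) = (N + m.-1) %/ m.
Proof.
move=> m_gt0; elim: N => [|N IH]; first by rewrite add0n divn_small // prednK.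
rewrite -addn1 iotaD count_cat IH /= addn0 add0n addn1 addSn divnS //.
by rewrite -addnS prednK // (dvdn_addl _ (dvdnn m)) addnC.
Qed.

Lemma ceil_div_bounds (m N : nat) : 0 < m ->
  N <= m * ((N + m.-1) %/ m) <= N + m.-1.
Proof.
move=> m_gt0; have := leq_divM (N + m.-1) m; have := ltn_ceil (N + m.-1) m_gt0.
lia.
Qed.

Lemma count_dvdn_window (m w u : nat) : 0 < m ->
  (`| (m * count (fun k => m %| w + k)%N (iota 0 u))%:Z - u%:Z | <= (m.-1)%:Z)%R.
Proof.
move=> m_gt0; set c := count _ (iota 0 u).
have split_count : count (dvdn m) (iota 0 w) + c = count (dvdn m) (iota 0 (w + u)).
  by rewrite iotaD count_cat add0n -(addn0 w) iotaDl count_map addn0.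
rewrite !count_dvdn_iota // in split_count.
have := ceil_div_bounds _ w m_gt0; have := ceil_div_bounds _ (w + u) m_gt0.
move: split_count => /(congr1 (muln m)); rewrite mulnDr.
lia.
Qed.

Lemma count_reindex (b f : pred nat) (T : nat) :
  count (fun t => b t && f (count b (iota 0 t))) (iota 0 T)
  = count f (iota 0 (count b (iota 0 T))).
Proof.
elim: T => [|T IH] //.
rewrite -addn1 !iotaD !count_cat IH /= !addn0.
by case: (b T); rewrite /= ?iotaD ?count_cat /= ?addn0.
Qed.

Lemma modn_eq_dvdn (N m i0 : nat) : i0 < m ->
  (N %% m == i0) = (m %| N + (m - i0)).
Proof.
move=> lt_i0m.
by rewrite -{1}(modn_small lt_i0m) -(eqn_modDr (m - i0)) (subnKC (ltnW lt_i0m)) modnn.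
Qed.

Lemma shift_inj d (x : point d) : injective (shift x).
Proof.
move=> [k1 s1] [k2 s2] /ffunP/(_ k1); rewrite !ffunE eqxx /= => /addrI.
by case: (eqVneq k1 k2) => [<-|_]; case: s1; case: s2.
Qed.

Lemma shift_opp d (x : point d) (e : dir d) : shift (shift x e) (e.1, ~~ e.2) = x.
Proof.
apply/ffunP => i; rewrite !ffunE /=.
by case: (i == e.1); case: e.2; rewrite /= ?addr0 ?addrK ?addrNK.
Qed.

Section RotorDynamics.
Variables (d : nat) (ord : 'I_(2 * d) -> dir d) (rho0 : point d -> 'I_(2 * d)).

Lemma agg_stateS (t : nat) :
  agg_state ord rho0 t.+1 = agg_step ord (agg_state ord rho0 t).
Proof. exact: iterS. Qed.

Lemma exitsS (t : nat) (x : point d) :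
  exits ord rho0 t.+1 x = exits ord rho0 t x + exits_at ord rho0 t x.
Proof. by rewrite /exits -addn1 iotaD count_cat /= addn0. Qed.

Lemma rotor_exits (t : nat) (x : point d) :
  val (rotor (agg_state ord rho0 t) x) = (rho0 x + exits ord rho0 t x) %% (2 * d).
Proof.
elim: t => [|t IH]; first by rewrite /= addn0 modn_small.
rewrite exitsS agg_stateS /exits_at /agg_step.
set s := agg_state ord rho0 t.
case: (eqVneq x (pos s)) => [x_pos|x_neq]; case: ifP => occupied /=.
- by rewrite -x_pos in occupied *; rewrite eqxx /= IH occupied -addn1 modnDml addnA.
- by rewrite -x_pos in occupied *; rewrite occupied addn0.
- by rewrite (negbTE x_neq) addn0.
- by rewrite addn0.
Qed.

Lemma pos_after_exit (t : nat) (x : point d) : exits_at ord rho0 t x ->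
  pos (agg_state ord rho0 t.+1)
  = shift x (ord (ordS (rotor (agg_state ord rho0 t) x))).
Proof.
by rewrite agg_stateS /exits_at /agg_step => /andP[/eqP <- ->] /=; rewrite eqxx.
Qed.

(* If ord i0 = e, the crossings from x to x + e are the exits numbered
   k + 1 (k < u(x)) with rho0 x + k + 1 = i0 mod 2d. *)
Lemma crossings_count (T : nat) (x : point d) (i0 : 'I_(2 * d)) :
  injective ord ->
  crossings ord rho0 T x (shift x (ord i0))
  = count (fun k => 2 * d %| (rho0 x).+1 + (2 * d - i0) + k)
          (iota 0 (exits ord rho0 T x)).
Proof.
move=> ord_inj; rewrite /crossings /exits -count_reindex.
apply: eq_count => t /=; case exit_t: (exits_at ord rho0 t x) => //=.
rewrite (pos_after_exit _ _ exit_t) (inj_eq (@shift_inj _ x)) (inj_eq ord_inj).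
rewrite -val_eqE /= rotor_exits -addn1 modnDml modn_eq_dvdn //.
by congr (_ %| _); rewrite /exits; lia.
Qed.

Lemma crossings_vs_exits (T : nat) (x : point d) (e : dir d) :
  0 < 2 * d -> injective ord ->
  (`| (2 * d * crossings ord rho0 T x (shift x e))%:Z
      - (exits ord rho0 T x)%:Z | <= (2 * d).-1%:Z)%R.
Proof.
move=> m_gt0 ord_inj.
have /codomP[i0 ->] : e \in codom ord.
  by apply: (inj_card_onto ord_inj); rewrite card_prod !card_ord card_bool mulnC.
by rewrite crossings_count //; apply: count_dvdn_window.
Qed.

End RotorDynamics.

Theorem lemma5p1 (d n : nat) (ord : 'I_(2 * d) -> dir d) (rho0 : point d -> 'I_(2 * d))
  (T : nat) (x y : point d) :
  2 <= d -> 1 <= n -> injective ord -> final_time ord rho0 n T -> neighbors x y ->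
  (`| (exits ord rho0 T y)%:Z - (exits ord rho0 T x)%:Z
        + (2 * d)%:Z * kappa ord rho0 T x y | <= (4 * d - 2)%:Z)%R.
Proof.
move=> d_ge2 _ ord_inj _ [e ->].
have m_gt0 : 0 < 2 * d by lia.
have bound_xy := @crossings_vs_exits _ ord rho0 T x e m_gt0 ord_inj.
have bound_yx := @crossings_vs_exits _ ord rho0 T (shift x e) (e.1, ~~ e.2) m_gt0 ord_inj.
rewrite shift_opp in bound_yx.
rewrite /kappa; move: bound_xy bound_yx.
set ux := exits _ _ _ x; set uy := exits _ _ _ (shift x e).
set Nxy := crossings _ _ _ x _; set Nyx := crossings _ _ _ (shift x e) x.
(* u(y) - u(x) + 2d kappa = (2d Nxy - ux) - (2d Nyx - uy): triangle inequality. *)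
lia.
Qed.
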